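(* Let $n\ge 2$. For every $T\in\mathrm{C}$ we have $\tilde T T\in\mathrm{C}^{\overline{01}}$. Consequently, $$\mathrm{A}=\begin{cases}\{T\in\mathrm{C}^\times:\ \tilde T T\in(\mathrm{C}^0)^\times\}, & n\equiv 0,2,3 \pmod 4,\\ \{T\in\mathrm{C}^\times:\ \tilde T T\in(\mathrm{C}^0\oplus\mathrm{C}^n)^\times\}, & n\equiv 1\pmod 4.\end{cases}$$
   Context: Let $\mathrm{C}$ be either the real Clifford algebra $C\ell_{p,q}$ with $p+q=n$, or the complex Clifford algebra $C\ell(\mathbb{C}^n)$. It has identity $e$ and generators $e_1,\dots,e_n$ satisfying $e_ae_b+e_be_a=2\eta_{ab}e$. In the real case $\eta=\mathrm{diag}(1,\dots,1,-1,\dots,-1)$ with $p$ entries $+1$ and $q$ entries $-1$. In the complex case $\eta=I_n$. $\mathrm{C}^k$ is the grade-$k$ subspace, spanned by the products $e_{a_1}\cdots e_{a_k}$ with $a_1<\dots<a_k$. The reversion $U\mapsto\tilde U$ is the linear anti-automorphism acting on $\mathrm{C}^k$ as multiplication by $(-1)^{k(k-1)/2}$. For $m=0,1,2,3$ let $\mathrm{C}^{\overline m}=\bigoplus_{k\equiv m \pmod 4}\mathrm{C}^k$, and $\mathrm{C}^{\overline{kl}}=\mathrm{C}^{\overline k}\oplus\mathrm{C}^{\overline l}$. For $S\subseteq\mathrm{C}$, $S^\times$ is the set of elements of $S$ invertible in $\mathrm{C}$. $\mathrm{Z}$ is the center of $\mathrm{C}$: $\mathrm{Z}=\mathrm{C}^0$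 for $n$ even and $\mathrm{Z}=\mathrm{C}^0\oplus\mathrm{C}^n$ for $n$ odd. Define $\mathrm{A}:=\{T\in\mathrm{C}^\times:\ \tilde T T\in\mathrm{Z}^\times\}$. *)

(* Concrete model of the Clifford algebra with a diagonal
   metric eta : 'I_n -> F over a field F: elements are coefficient functions
   on the blade basis e_A (A a subset of {0..n-1}, e_A = e_{a1}...e_{ak}
   with a1<...<ak). *)
From HB Require Import structures.
From mathcomp Require Import all_boot all_order all_algebra.
From mathcomp Require Import reals complex.
Set Implicit Arguments. Unset Strict Implicit. Unset Printing Implicit Defensive.
Import Order.TTheory GRing.Theory Num.Theory.
Local Open Scope ring_scope.

Section Clifford.
Variables (F : fieldType) (n : nat) (eta : 'I_n -> F).

Definition clif := {ffun {set 'I_n} -> F}.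

(* e_A e_B = blade_coef A B * e_(A symmetric-difference B) *)
Definition blade_coef (A B : {set 'I_n}) : F :=
  (-1) ^+ #|[set p : 'I_n * 'I_n | (p.1 \in A) && (p.2 \in B) && (p.2 < p.1)%N]|
  * \prod_(i in A :&: B) eta i.

Definition symdiff (A B : {set 'I_n}) : {set 'I_n} := (A :\: B) :|: (B :\: A).

Definition cl_mul (x y : clif) : clif :=
  [ffun C => \sum_(A : {set 'I_n}) \sum_(B : {set 'I_n} | symdiff A B == C)
               x A * y B * blade_coef A B].

Definition cl_one : clif := [ffun A : {set 'I_n} => (A == set0)%:R].

Definition cl_rev (x : clif) : clif :=
  [ffun A : {set 'I_n} => (-1) ^+ 'C(#|A|, 2) * x A].

Definition cl_unit (x : clif) : Prop :=
  exists y : clif, cl_mul x y = cl_one /\ cl_mul y x = cl_one.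

(* x in C^{\bar 0} (+) C^{\bar 1}: only grades k = 0,1 mod 4 *)
Definition in_grade01bar (x : clif) : Prop :=
  forall A : {set 'I_n}, (2 <= #|A| %% 4)%N -> x A = 0.

Definition in_grade0 (x : clif) : Prop :=
  forall A : {set 'I_n}, A != set0 -> x A = 0.

Definition in_grade0n (x : clif) : Prop :=
  forall A : {set 'I_n}, (0 < #|A| < n)%N -> x A = 0.

Definition in_center (x : clif) : Prop :=
  if odd n then in_grade0n x else in_grade0 x.

Definition in_Aset (T : clif) : Prop :=
  cl_unit T /\ in_center (cl_mul (cl_rev T) T) /\ cl_unit (cl_mul (cl_rev T) T).

Definition clifford_claim : Prop :=
  (forall T : clif, in_grade01bar (cl_mul (cl_rev T) T)) /\
  (forall T : clif, in_Aset T <->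
     (cl_unit T /\
      (if (n %% 4 == 1)%N then in_grade0n (cl_mul (cl_rev T) T)
       else in_grade0 (cl_mul (cl_rev T) T)) /\
      cl_unit (cl_mul (cl_rev T) T))).

End Clifford.

Definition signature_metric (F : fieldType) (n p : nat) : 'I_n -> F :=
  fun i => if (i < p)%N then 1 else -1.

Definition identity_metric (F : fieldType) (n : nat) : 'I_n -> F :=
  fun _ => 1.

(* Idea.  The reversion U |-> ~U is an involutive anti-automorphism, hence
   ~(~T T) = ~T ~~T = ~T T: the element ~T T is fixed by reversion.  On
   grade k reversion is the sign (-1)^(k(k-1)/2), which is -1 exactly when
   k = 2, 3 (mod 4); so in characteristic <> 2 a reversion-fixed element has
   no components of grade 2, 3 (mod 4).  For the description of the set A
   only the centre matters: for n odd the centre is C^0 (+) C^n, and when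
   n = 3 (mod 4) the C^n-component of ~T T vanishes by the first part, so
   the condition collapses to ~T T in C^0.

   The theorem follows since 2 <> 0 in the real and complex fields. *)
From HB Require Import structures.
From mathcomp Require Import all_boot all_order all_algebra.
From mathcomp Require Import reals complex ring zify.
Set Implicit Arguments. Unset Strict Implicit. Unset Printing Implicit Defensive.
Import Order.TTheory GRing.Theory Num.Theory.
Local Open Scope nat_scope.

(* Pairs from a disjoint union of an m-set and a k-set. *)
Lemma bin2D m k : 'C(m + k, 2) = 'C(m, 2) + 'C(k, 2) + m * k.
Proof.
elim: k => [|k IH]; first by rewrite muln0 !addn0.
rewrite addnS binS IH bin1 binS bin1 mulnS; lia.
Qed.

Lemma odd_bin2_double k : odd 'C(k + k, 2) = odd k.
Proof. by rewrite bin2D oddD oddD addbb /= oddM andbb. Qed.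

Lemma odd_bin2_mod4 k : odd 'C(k, 2) = (2 <= k %% 4).
Proof.
rewrite {1}(divn_eq k 4) bin2D oddD oddD.
have -> : k %/ 4 * 4 = k %/ 4 * 2 + k %/ 4 * 2 by lia.
rewrite odd_bin2_double oddM /= andbF /= oddM oddD addbb /= addbF.
have : k %% 4 < 4 by rewrite ltn_mod.
by case: (k %% 4) => [|[|[|[|]]]].
Qed.

(* Parity bookkeeping behind ~(e_A e_B) = ~e_B ~e_A: with d = |A (+) B|,
   k = |A & B|, a = |A|, b = |B| and i1, i2 the two inversion counts. *)
Lemma odd_bin2_merge d k a b i1 i2 :
  d + k.*2 = a + b -> i1 + i2 + k = a * b ->
  odd ('C(d, 2) + i1) = odd ('C(a, 2) + 'C(b, 2) + i2).
Proof.
move=> Hd Hi.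
have /(congr1 odd) : 'C(d + k.*2, 2) = 'C(a + b, 2) by rewrite Hd.
rewrite -addnn bin2D [in X in _ = X -> _]bin2D -Hi.
rewrite !oddD odd_bin2_double oddM /= oddD addbb andbF addbF.
by case: (odd 'C(d, 2)); case: (odd i1); case: (odd i2); case: (odd k);
   case: (odd 'C(a, 2)); case: (odd 'C(b, 2)).
Qed.

Section BladeCounting.
Variable n : nat.
Implicit Types A B : {set 'I_n}.

(* Inversion pairs (i, j) in A x B with j < i; their number is the number of
   transpositions needed to sort the product e_A e_B. *)
Definition inversions A B : {set 'I_n * 'I_n} :=
  [set p : 'I_n * 'I_n | (p.1 \in A) && (p.2 \in B) && (p.2 < p.1)%N].

Lemma card_inversions_swap A B :
  #|inversions B A| =
  #|[set p : 'I_n * 'I_n | (p.1 \in A) && (p.2 \in B) && (p.1 < p.2)%N]|.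
Proof.
have swap_inj : injective (fun p : 'I_n * 'I_n => (p.2, p.1)).
  by move=> [? ?] [? ?] [-> ->].
rewrite -(card_preimset (inversions B A) swap_inj); apply: eq_card => -[i j].
by rewrite !inE /= [(j \in B) && _]andbC.
Qed.

Lemma card_setI_diag A B :
  #|A :&: B| =
  #|[set p : 'I_n * 'I_n | (p.1 \in A) && (p.2 \in B) && (p.1 == p.2)]|.
Proof.
have diag_inj : injective (fun i : 'I_n => (i, i)) by move=> ? ? [].
rewrite -(card_imset _ diag_inj); apply: eq_card => -[i j].
rewrite !inE /=; apply/imsetP/idP => [[k] | /andP[/andP[Ha Hb] /eqP Hij]].
  by rewrite !inE => /andP[? ?] [-> ->]; rewrite eqxx andbT; apply/andP.
by subst j; exists i => //; rewrite inE Ha Hb.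
Qed.

(* A x B splits into decreasing, increasing and diagonal pairs. *)
Lemma card_inversions A B :
  #|inversions A B| + #|inversions B A| + #|A :&: B| = #|A| * #|B|.
Proof.
rewrite (card_inversions_swap A B) card_setI_diag -(cardsX A B).
rewrite -(cardsID [set p : 'I_n * 'I_n | (p.2 < p.1)%N] (setX A B)).
rewrite -(cardsID [set p : 'I_n * 'I_n | (p.1 < p.2)%N] (setX A B :\: _)).
rewrite -addnA; congr (_ + (_ + _)); apply: eq_card => -[i j]; rewrite !inE /=.
- by rewrite andbC.
- by case: (i \in A); case: (j \in B) => //=; rewrite ?andbT; case: ltngtP.
- have -> : (i == j) = ~~ (i < j)%N && ~~ (j < i)%N.
    by rewrite -val_eqE /=; case: ltngtP.
  by case: (i \in A); case: (j \in B); case: (i < j)%N; case: (j < i)%N.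
Qed.

Lemma card_symdiff A B : #|symdiff A B| + (#|A :&: B|).*2 = #|A| + #|B|.
Proof.
rewrite /symdiff cardsU.
have -> : (A :\: B) :&: (B :\: A) = set0.
  by apply/setP => i; rewrite !inE; case: (i \in A); case: (i \in B).
rewrite cards0 subn0 -addnn.
have splitA := cardsID B A; have splitB := cardsID A B.
rewrite setIC in splitB; lia.
Qed.

End BladeCounting.

Local Open Scope ring_scope.

Section Reversion.
Variables (F : fieldType) (n : nat) (eta : 'I_n -> F).

(* Blade form of ~(e_A e_B) = ~e_B ~e_A. *)
Lemma rev_blade_coef (A B : {set 'I_n}) :
  (-1) ^+ 'C(#|symdiff A B|, 2) * blade_coef eta A B =
  (-1) ^+ 'C(#|A|, 2) * (-1) ^+ 'C(#|B|, 2) * blade_coef eta B A.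
Proof.
rewrite /blade_coef setIC !mulrA -!exprD -signr_odd -[in RHS]signr_odd.
rewrite (@odd_bin2_merge _ #|A :&: B| #|A| #|B| _ #|inversions B A|) //.
  exact: card_symdiff.
by rewrite -(card_inversions A B) setIC.
Qed.

Lemma cl_rev_mul (x y : clif F n) :
  cl_rev (cl_mul eta x y) = cl_mul eta (cl_rev y) (cl_rev x).
Proof.
apply/ffunP => C; rewrite !ffunE big_distrr /=.
under eq_bigr do rewrite big_distrr /= big_mkcond /=.
rewrite exchange_big /=; apply: eq_bigr => B _.
rewrite [RHS]big_mkcond /=; apply: eq_bigr => A _.
have -> : symdiff B A = symdiff A B by rewrite /symdiff setUC.
case: eqP => // <-; rewrite !ffunE.
transitivity
  (x A * y B * ((-1) ^+ 'C(#|symdiff A B|, 2) * blade_coef eta A B)).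
  by ring.
rewrite rev_blade_coef; ring.
Qed.

Lemma cl_revK : involutive (@cl_rev F n).
Proof.
move=> x; apply/ffunP => A.
by rewrite !ffunE mulrA -exprD addnn -signr_odd odd_double mul1r.
Qed.

Lemma rev_fixed_grade01bar (x : clif F n) :
  (2 : F) != 0 -> cl_rev x = x -> in_grade01bar x.
Proof.
move=> two_neq0 fixed A HA.
have := congr1 (fun f : clif F n => f A) fixed; rewrite ffunE.
rewrite -signr_odd odd_bin2_mod4 HA expr1 mulN1r => HxA.
have : x A *+ 2 = 0 by rewrite mulr2n -{1}HxA addNr.
by move/eqP; rewrite -mulr_natr mulf_eq0 (negbTE two_neq0) orbF => /eqP.
Qed.

Lemma rev_norm_grade01bar (T : clif F n) :
  (2 : F) != 0 -> in_grade01bar (cl_mul eta (cl_rev T) T).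
Proof.
by move=> two_neq0; apply: rev_fixed_grade01bar => //; rewrite cl_rev_mul cl_revK.
Qed.

End Reversion.

Lemma odd_mod4 (n : nat) : odd n = (n %% 4 == 1)%N || (n %% 4 == 3)%N.
Proof.
rewrite {1}(divn_eq n 4) oddD oddM /= andbF /=.
have : (n %% 4 < 4)%N by rewrite ltn_mod.
by case: (n %% 4)%N => [|[|[|[|]]]].
Qed.

(* For an element of C^{01 bar}, membership in the centre amounts to lying in
   C^0 (+) C^n when n = 1 mod 4 and to lying in C^0 otherwise: when
   n = 3 mod 4 the top grade has residue 3 and is already excluded. *)
Lemma center_grade01bar (F : fieldType) (n : nat) (x : clif F n) :
  in_grade01bar x ->
  in_center x <-> (if (n %% 4 == 1)%N then in_grade0n x else in_grade0 x).
Proof.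
move=> grade01x; rewrite /in_center odd_mod4.
case: eqP => [//|_]; case: eqP => [n_mod4 | _] //=.
split=> [grade0nx A | grade0x A /andP[A_gt0 _]]; last first.
  by apply: grade0x; rewrite -card_gt0.
rewrite -card_gt0 => A_gt0; have [A_ltn | n_leA] := ltnP #|A| n.
  by apply: grade0nx; rewrite A_gt0 A_ltn.
have A_full : #|A| = n.
  by apply/eqP; rewrite eqn_leq n_leA -[X in (_ <= X)%N](card_ord n) max_card.
by apply: grade01x; rewrite A_full n_mod4.
Qed.

Lemma clifford_claim_char_neq2 (F : fieldType) (n : nat) (eta : 'I_n -> F) :
  (2 : F) != 0 -> clifford_claim eta.
Proof.
move=> two_neq0; split=> [T|T]; first exact: rev_norm_grade01bar.
have center_iff := center_grade01bar (rev_norm_grade01bar eta T two_neq0).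
by rewrite /in_Aset center_iff.
Qed.

Theorem mainTheorem5 (n : nat) (hn : (2 <= n)%N) :
  (* real Clifford algebras Cl_{p,q}, p + q = n *)
  (forall (R : realType) (p q : nat), (p + q)%N = n ->
     @clifford_claim R n (@signature_metric R n p)) /\
  (* complex Clifford algebra Cl(C^n), C = R[i] *)
  (forall R : realType, @clifford_claim (complex R) n (@identity_metric (complex R) n)).
Proof.
split=> [R p q _ | R]; apply: clifford_claim_char_neq2; by rewrite pnatr_eq0.
Qed.
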